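(* Let $f$ be the morphism on $\{0,1\}$ given by $f(0)=10$, $f(1)=0101$, so that $f^2(0)=010110$ and $f^2(1)=100101100101$. The infinite fixed point of $f^2$ beginning with $0$ is $3$-automatic.
   Context: For an integer $q\ge 2$, a sequence is $q$-automatic if it is the image under a letter-to-letter map of a fixed point of a morphism all of whose letter-images have length $q$. *)

From mathcomp Require Import all_boot.
Set Implicit Arguments. Unset Strict Implicit. Unset Printing Implicit Defensive.

Definition f (a : nat) : seq nat :=
  if a == 0 then [:: 1; 0] else [:: 0; 1; 0; 1].

Definition morph_word (g : nat -> seq nat) (w : seq nat) : seq nat :=
  flatten (map g w).

Definition f2 (a : nat) : seq nat := morph_word f (f a).

(* The infinite fixed point of f^2 beginning with 0: it is the limit of
   (f^2)^k(0); since f^2(0) begins with 0 and |(f^2)^k(0)| >= 6^k, the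
   n-th letter is already the n-th letter of (f^2)^(n+1)(0). *)
Definition fixpt_f2 (n : nat) : nat :=
  nth 0 (iter n.+1 (morph_word f2) [:: 0]) n.

(* q-automatic: image under a letter-to-letter (coding) map tau of a fixed
   point u of a q-uniform morphism phi on a finite alphabet 'I_k.
   u is a fixed point of phi iff phi(u) = u, i.e. for all n and i < q,
   u (q*n + i) is the i-th letter of phi (u n). *)
Definition automatic (T : Type) (q : nat) (x : nat -> T) : Prop :=
  exists (k : nat) (phi : 'I_k -> q.-tuple 'I_k) (u : nat -> 'I_k)
         (tau : 'I_k -> T),
    (forall n (i : 'I_q), u (q * n + i) = tnth (phi (u n)) i) /\
    (forall n, x n = tau (u n)).

From mathcomp Require Import all_boot.
From mathcomp Require Import zify.
Set Implicit Arguments. Unset Strict Implicit. Unset Printing Implicit Defensive.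

(* The morphism f^2 factors as f^2 = beta o gamma, where
   gamma : 0 -> 0', 1 -> 1'1' codes letters of {0,1} into the alphabet
   {0',1'} (here bool) and beta : 0' -> f(1)f(0) = 010110,
   1' -> f(0)f(1) = 100101 is 6-uniform.  The conjugate morphism
   sigma = gamma o beta is then 9-uniform on bool, and
   (f^2)^(k+1)(0) = beta(sigma^k(0')), so the fixed point x of f^2 is the
   image under beta of the fixed point z of sigma:
       x(n) = beta(z(n/6))[n mod 6],     z(m) = sigma(z(m/9))[m mod 9].
   Since 6 = 2*3 and 9 = 3^2, the triple
       u(n) = (z(n/6), n mod 6, z(n/2))
   satisfies a base-3 recurrence u(3n+i) = delta(u(n), i), and x = tau o u. *)

Definition morph (A B : Type) (g : A -> seq B) (w : seq A) : seq B :=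
  flatten (map g w).

Lemma morph_cat (A B : Type) (g : A -> seq B) (w1 w2 : seq A) :
  morph g (w1 ++ w2) = morph g w1 ++ morph g w2.
Proof. by rewrite /morph map_cat flatten_cat. Qed.

Lemma morph_comp (A B C : Type) (g : B -> seq C) (h : A -> seq B) (w : seq A) :
  morph g (morph h w) = morph (fun a => morph g (h a)) w.
Proof.
elim: w => [|a w IH] //=.
by rewrite -[a :: w]cat1s !morph_cat IH /morph /= !cats0.
Qed.

Section UniformMorphism.
Variables (A B : Type) (g : A -> seq B) (q : nat).
Hypothesis size_g : forall a, size (g a) = q.

Lemma size_morph (w : seq A) : size (morph g w) = q * size w.
Proof.
elim: w => [|a w IH] /=; first by rewrite muln0.
by rewrite /morph /= size_cat -/(morph g w) IH size_g mulnS.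
Qed.

Lemma nth_morph (d : B) (da : A) (w : seq A) (n : nat) :
  n < q * size w ->
  nth d (morph g w) n = nth d (g (nth da w (n %/ q))) (n %% q).
Proof.
elim: w n => [|a w IH] n /=; first by rewrite muln0.
rewrite mulnS /morph /= -/(morph g w) nth_cat size_g => n_lt.
case: ltnP => [n_lt_q | q_le_n]; first by rewrite divn_small // modn_small.
have q_gt0 : 0 < q by lia.
have -> : n = (n - q) + q by lia.
rewrite addnK divnDr ?dvdnn // divnn q_gt0 addn1 /= modnDr.
by apply: IH; lia.
Qed.

End UniformMorphism.

(* The fixed point beginning with d of a q-uniform morphism sig (q >= 2)
   whose image of d begins with d: it is the limit of the words sig^k(d),
   each of which is a prefix of the next. *)
Section UniformFixedPoint.
Variables (A : Type) (d : A) (sig : A -> seq A) (q : nat).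
Hypotheses (size_sig : forall a, size (sig a) = q) (q_gt1 : 1 < q)
  (sig_d : head d (sig d) = d).

Definition approx (k : nat) : seq A := iter k (morph sig) [:: d].

Lemma size_approx (k : nat) : size (approx k) = q ^ k.
Proof. by elim: k => [|k IH] //=; rewrite (size_morph size_sig) IH expnS. Qed.

Lemma approx_prefix (k : nat) : exists t, approx k.+1 = approx k ++ t.
Proof.
elim: k => [|k [t approx_k]].
  exists (behead (sig d)); rewrite /approx /morph /= cats0.
  case E: (sig d) => [|a s]; first by move: (size_sig d); rewrite E /=; lia.
  by move: sig_d; rewrite E /= => ->.
by exists (morph sig t); rewrite [approx k.+2]/approx iterS -/(approx k.+1) {1}approx_k morph_cat.
Qed.

Lemma nth_approx_stable (k k' n : nat) :
  k <= k' -> n < q ^ k -> nth d (approx k) n = nth d (approx k') n.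
Proof.
move=> /subnK <- n_lt; elim: (k' - k) => [|j IH] //.
rewrite IH addSn; have [t ->] := approx_prefix (j + k).
rewrite nth_cat size_approx ifT //; apply: leq_trans n_lt _.
by rewrite leq_exp2l ?leq_addl // ltnW.
Qed.

(* Since n < q^n, position n is already settled in sig^n(d). *)
Definition fixpt (n : nat) : A := nth d (approx n) n.

Lemma nth_approx (k n : nat) : n < q ^ k -> nth d (approx k) n = fixpt n.
Proof.
rewrite /fixpt => n_lt; case: (leqP k n) => [k_le_n | n_lt_k].
  exact: (@nth_approx_stable k n n).
by rewrite (@nth_approx_stable n k n) ?(ltn_expl n q_gt1) // ltnW.
Qed.

Lemma fixpt_rec (n : nat) : fixpt n = nth d (sig (fixpt (n %/ q))) (n %% q).
Proof.
have n_lt : n < q ^ n := ltn_expl n q_gt1.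
have n_lt' : n < q * q ^ n by rewrite (leq_trans n_lt) // leq_pmull // ltnW.
rewrite -(@nth_approx n.+1) ?expnS //.
rewrite [approx _]/approx iterS (nth_morph size_sig d d) -/(approx n); last first.
  by rewrite size_approx.
by rewrite nth_approx // (leq_ltn_trans (leq_div _ _)).
Qed.

End UniformFixedPoint.

(* Automatic sequences may be produced by recurrences over any finite
   state type: if u(q n + i) = delta (u n) i and x = tau o u, then x is
   q-automatic (number the states by [enum_rank]). *)
Lemma automatic_of_recurrence (T : finType) (X : Type) (q : nat)
    (x : nat -> X) (u : nat -> T) (delta : T -> 'I_q -> T) (tau : T -> X) :
  (forall n (i : 'I_q), u (q * n + i) = delta (u n) i) ->
  (forall n, x n = tau (u n)) ->
  automatic q x.
Proof.
move=> u_rec x_eq.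
exists #|T|, (fun s => [tuple enum_rank (delta (enum_val s) i) | i < q]),
  (fun n => enum_rank (u n)), (fun s => tau (enum_val s)).
split=> [n i | n]; last by rewrite enum_rankK.
by rewrite tnth_mktuple enum_rankK u_rec.
Qed.

Definition gamma (a : nat) : seq bool :=
  if a == 0 then [:: false] else [:: true; true].

Definition beta (b : bool) : seq nat :=
  if b then [:: 1; 0; 0; 1; 0; 1] else [:: 0; 1; 0; 1; 1; 0].

Definition sigma (b : bool) : seq bool := morph gamma (beta b).

Lemma size_beta (b : bool) : size (beta b) = 6. Proof. by case: b. Qed.
Lemma size_sigma (b : bool) : size (sigma b) = 9. Proof. by case: b. Qed.

(* f^2 = beta o gamma: f^2(0) = f(1)f(0) = beta(0'), f^2(1) = beta(1')beta(1'). *)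
Lemma f2_factor (w : seq nat) : morph f2 w = morph beta (morph gamma w).
Proof.
rewrite morph_comp; congr flatten; apply: eq_map => a.
by rewrite /f2 /gamma /f; case: (a == 0).
Qed.

Lemma iter_f2 (k : nat) :
  iter k.+1 (morph f2) [:: 0] = morph beta (approx false sigma k).
Proof.
elim: k => [|k IH] //.
by rewrite iterS IH f2_factor [morph gamma _]morph_comp.
Qed.

Definition z (n : nat) : bool := fixpt false sigma n.

Lemma z_rec (n : nat) : z n = nth false (sigma (z (n %/ 9))) (n %% 9).
Proof. exact: (fixpt_rec (d := false) size_sigma isT erefl n). Qed.

Lemma fixpt_f2_beta (n : nat) : fixpt_f2 n = nth 0 (beta (z (n %/ 6))) (n %% 6).
Proof.
have n_lt : n < 9 ^ n := ltn_expl (m := 9) n isT.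
rewrite /fixpt_f2 iter_f2 (nth_morph size_beta 0 false); last first.
  by rewrite (size_approx false size_sigma) (leq_trans n_lt) // leq_pmull.
rewrite /z -(@nth_approx _ false _ _ size_sigma isT erefl n) //.
exact: leq_ltn_trans (leq_div _ _) n_lt.
Qed.

Definition state := (bool * 'I_6 * bool)%type.

Definition u (n : nat) : state :=
  (z (n %/ 6), Ordinal (ltn_pmod n (isT : 0 < 6)), z (n %/ 2)).

Definition delta (s : state) (i : 'I_3) : state :=
  let: (a, r, c) := s in
  (c, Ordinal (ltn_pmod (3 * r + i) (isT : 0 < 6)),
   nth false (sigma a) ((3 * r + i) %/ 2)).

Definition tau (s : state) : nat := let: (a, r, _) := s in nth 0 (beta a) r.

(* Writing n = 6 p + r, the index (3 n + i)/2 equals 9 p + (3 r + i)/2 with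
   (3 r + i)/2 < 9, so z((3n+i)/2) is read off sigma(z(p)). *)
Lemma u_rec (n : nat) (i : 'I_3) : u (3 * n + i) = delta (u n) i.
Proof.
have i_lt := ltn_ord i.
have quot6 : (3 * n + i) %/ 6 = n %/ 2 by lia.
have rem6 : (3 * n + i) %% 6 = (3 * (n %% 6) + i) %% 6 by lia.
have quot9 : (3 * n + i) %/ 2 %/ 9 = n %/ 6 by lia.
have rem9 : (3 * n + i) %/ 2 %% 9 = (3 * (n %% 6) + i) %/ 2 by lia.
rewrite /u /delta quot6 (z_rec ((3 * n + i) %/ 2)) quot9 rem9.
by congr (_, _, _); apply: val_inj; rewrite /= rem6.
Qed.

Theorem mainTheorem6 : automatic 3 fixpt_f2.
Proof.
apply: (automatic_of_recurrence (u := u) (delta := delta) (tau := tau)).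
  exact: u_rec.
by move=> n; rewrite fixpt_f2_beta.
Qed.
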